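(* Consider binary data $(x,y^* )$ with real covariate $x$ and true label $y^*\in\{0,1\}$, $p_k^*=\mathbb{P}(y^*=k)>0$, where covariates with true label $k$ have density $f_k^*$; let $X_k^*\sim f_k^*$ and assume $\mathbb{E}|X_k^*|<\infty$, $\mathbb{E}[X_1^*]>0$, $\mathbb{E}[X_0^*]<0$, $\mathbb{P}(X_1^*<0)>0$, $\mathbb{P}(X_0^*>0)>0$. Suppose observed labels $y$ arise by flipping each true label to the other class, independently across observations, with a probability that may depend on the true label and on $x$. Let $p_k=\mathbb{P}(y=k)$, let $X_k$ have the law of $x$ given $y=k$, and let $X$ have the (unconditional) law of $x$. Assume (iii) $\mathbb{E}[X_1^*]\ge\mathbb{E}[X_1]$ and $\mathbb{E}[X_0^*]\le\mathbb{E}[X_0]$; (iv) $p_1^*\mathbb{E}[X_1^*]-p_0^*\mathbb{E}[X_0^*]>p_1\mathbb{E}[X_1]-p_0\mathbb{E}[X_0]$. Define \[ \mathcal{L}^*(s)=s\big(p_1^*\mathbb{E}[X_1^*]-p_0^*\mathbb{E}[X_0^*]\big)-\mathbb{E}\big[\log(e^{sX}+e^{-sX})\big],\quad \mathcal{L}(s)=s\big(p_1\mathbb{E}[X_1]-p_0\mathbb{E}[X_0]\big)-\mathbb{E}\big[\log(e^{sX}+e^{-sX})\big], \] and suppose $\mathcal{L}^*$ and $\mathcal{L}$ attain their maxima over $s\in\mathbb{R}$ at $\hat s^*$ and $\hat s$ respectively. Then $\hat s<\hat s^*$.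
   Context: The model is one-dimensional logistic regression without intercept, $\mathbb{P}(y^*=1\mid x)=e^{sx}/(e^{sx}+e^{-sx})$; $\mathcal{L}^*$ and $\mathcal{L}$ are the large-sample limits of the normalised log-likelihoods on clean and on mislabelled data, so $\hat s^*$ and $\hat s$ are the limiting standard logistic regression estimates of $s$ from clean and noisy data. *)

From HB Require Import structures.
From mathcomp Require Import all_boot all_order all_algebra.
From mathcomp Require Import all_classical all_reals all_analysis.
Set Implicit Arguments. Unset Strict Implicit. Unset Printing Implicit Defensive.
Import Order.TTheory GRing.Theory Num.Theory.
Import numFieldNormedType.Exports.
Local Open Scope classical_set_scope.
Local Open Scope ring_scope.

Section Defs.
Context {d : measure_display} {T : measurableType d} {R : realType}
  (P : probability T R).

(* the event {lab = k} for a label map lab : T -> bool (true = class 1) *)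
Definition lab_event (lab : T -> bool) (k : bool) : set T :=
  [set t | lab t = k].

Definition lab_prob (lab : T -> bool) (k : bool) : R :=
  fine (P (lab_event lab k)).

Definition Eon (g : T -> R) (A : set T) : R :=
  fine (\int[P]_(t in A) (g t)%:E).

Definition cond_mean (x : T -> R) (lab : T -> bool) (k : bool) : R :=
  Eon x (lab_event lab k) / lab_prob lab k.

Definition loglik (x : T -> R) (lab : T -> bool) (s : R) : R :=
  s * (lab_prob lab true * cond_mean x lab true
       - lab_prob lab false * cond_mean x lab false)
  - Eon (fun t => ln (expR (s * x t) + expR (- (s * x t)))) setT.

End Defs.

From HB Require Import structures.
From mathcomp Require Import all_boot all_order all_algebra.
From mathcomp Require Import all_classical all_reals all_analysis.
From mathcomp Require Import measurable_realfun.
From mathcomp Require Import ring lra.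
Import Order.TTheory GRing.Theory Num.Theory.
Import numFieldNormedType.Exports.
Local Open Scope classical_set_scope.
Local Open Scope ring_scope.

(* Both log-likelihoods have the form [s * m - F s] with the same convex
   [F s = E[ln (e^(sX) + e^(-sX))]] and slopes [m* > m] by (iv); only this,
   measurability and integrability of [x] are used.  Maximizers of
   [s * m - F s] are nondecreasing in [m], so [shat <= shat*].  A common
   maximizer [s0] of both would give, for every [e > 0],
   [e (m* - m) <= F (s0 + e) + F (s0 - e) - 2 F s0].  Pointwise,
   [ln 2cosh (u + v) + ln 2cosh (u - v) - 2 ln 2cosh u <= 2 ln cosh v
    <= min (2|v|, 4 v^2)], so the right-hand side is [e * o(1)] by dominated
   convergence, a contradiction. *)

Section SlopeMaximizers.
Context {R : realFieldType} {F : R -> R}.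

Lemma argmax_slope_mono {a b s1 s2 : R} :
  (forall s, s * a - F s <= s1 * a - F s1) ->
  (forall s, s * b - F s <= s2 * b - F s2) ->
  0 <= (s2 - s1) * (b - a).
Proof. move=> max1 max2; have := max1 s2; have := max2 s1; nra. Qed.

Lemma common_argmax_slope_gap {a b s0 : R} (t : R) :
  (forall s, s * b - F s <= s0 * b - F s0) ->
  (forall s, s * a - F s <= s0 * a - F s0) ->
  t * (b - a) <= F (s0 + t) + F (s0 - t) - 2 * F s0.
Proof. move=> maxb maxa; have := maxb (s0 + t); have := maxa (s0 - t); lra. Qed.

End SlopeMaximizers.

Section Ln2cosh.
Context {R : realType}.

Lemma ln_le_subr1 (c : R) : 0 < c -> ln c <= c - 1.
Proof. by move=> c0; have := @le_ln1Dx R (c - 1); rewrite addrCA subrr addr0; apply; lra. Qed.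

Definition ln2cosh (w : R) : R := ln (expR w + expR (- w)).

Lemma expR_addN_ge2 (w : R) : 2 <= expR w + expR (- w).
Proof.
rewrite expRN; have e0 := expR_gt0 w.
have inv1 : expR w * (expR w)^-1 = 1 by rewrite mulfV // gt_eqF.
have := sqr_ge0 (expR w - 1); nra.
Qed.

Lemma expR_addN_le (w : R) : expR w + expR (- w) <= 2 * expR `|w|.
Proof.
have le_w : expR w <= expR `|w| by rewrite ler_expR ler_norm.
have le_Nw : expR (- w) <= expR `|w| by rewrite ler_expR -normrN ler_norm.
lra.
Qed.

Lemma ln2cosh_ge0 (w : R) : 0 <= ln2cosh w.
Proof. by apply: ln_ge0; have := expR_addN_ge2 w; lra. Qed.

Lemma ln2cosh_le (w : R) : ln2cosh w <= ln 2 + `|w|.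
Proof.
rewrite -[`|w|]expRK -lnM ?posrE ?expR_gt0 //.
rewrite ler_ln ?posrE ?mulr_gt0 ?expR_gt0 ?expR_addN_le //.
by have := expR_addN_ge2 w; lra.
Qed.

Lemma ln_cosh_le_min (v : R) :
  ln ((expR v + expR (- v)) / 2) <= Num.min `|v| (2 * v ^+ 2).
Proof.
have c1 : 1 <= (expR v + expR (- v)) / 2.
  by rewrite ler_pdivlMr //; have := expR_addN_ge2 v; lra.
have c0 : 0 < (expR v + expR (- v)) / 2 by lra.
have le_abs : ln ((expR v + expR (- v)) / 2) <= `|v|.
  rewrite -[X in _ <= X]expRK ler_ln ?posrE ?expR_gt0 //.
  by rewrite ler_pdivrMr // mulrC expR_addN_le.
rewrite le_min le_abs /=.
have [small|large] := lerP `|v| (1 / 2); last first.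
  apply: (le_trans le_abs).
  rewrite -(real_normK (num_real v)) expr2; have := normr_ge0 v; nra.
(* [ln (cosh v) <= cosh v - 1], and [e^v <= 1/(1 - v)], [e^-v <= 1/(1 + v)]
   give [cosh v <= 1/(1 - v^2) <= 1 + 2 v^2]. *)
have v2 : v ^+ 2 <= 1 / 4.
  by rewrite -(real_normK (num_real v)) expr2; have := normr_ge0 v; nra.
have sv : -(1 / 2) <= v <= 1 / 2 by rewrite -ler_norml.
have inv : expR v * expR (- v) = 1 by rewrite expRxMexpNx_1.
have lo1 := expR_ge1Dx v; have lo2 := expR_ge1Dx (- v).
have e1 := expR_gt0 v; have e2 := expR_gt0 (- v).
have up : (expR v + expR (- v)) * (1 - v ^+ 2) <= 2 by rewrite expr2; nra.
apply: (le_trans (ln_le_subr1 _ c0)).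
rewrite expr2 in v2 up *; nra.
Qed.

Lemma ln2cosh_second_diff (u v : R) :
  ln2cosh (u + v) + ln2cosh (u - v) - 2 * ln2cosh u
  <= 2 * ln ((expR v + expR (- v)) / 2).
Proof.
have hu := expR_addN_ge2 u; have hv := expR_addN_ge2 v.
set p := expR u + expR (- u) in hu *; set q := expR v + expR (- v) in hv *.
(* [e^(u+v) + e^-(u+v)] [e^(u-v) + e^-(u-v)] = p^2 + q^2 - 4 <= (p q / 2)^2 *)
have prod : (expR (u + v) + expR (- (u + v))) * (expR (u - v) + expR (- (u - v)))
            = p ^+ 2 + q ^+ 2 - 4.
  rewrite /p /q !opprD !opprK !expRD !expr2.
  have iu : expR u * expR (- u) = 1 by rewrite expRxMexpNx_1.
  have iv : expR v * expR (- v) = 1 by rewrite expRxMexpNx_1.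
  nra.
have pos1 : 0 < expR (u + v) + expR (- (u + v)) by rewrite addr_gt0 ?expR_gt0.
have pos2 : 0 < expR (u - v) + expR (- (u - v)) by rewrite addr_gt0 ?expR_gt0.
have key : ln (p ^+ 2 + q ^+ 2 - 4) <= ln (p ^+ 2) + ln ((q / 2) ^+ 2).
  have pq0 : 0 < p ^+ 2 + q ^+ 2 - 4 by rewrite !expr2; nra.
  rewrite -lnM ?posrE ?exprn_gt0 ?divr_gt0 //; try lra.
  rewrite ler_ln ?posrE ?mulr_gt0 ?exprn_gt0 ?divr_gt0 //; try lra.
  have h : 0 <= (p * p - 4) * (q * q - 4) by apply: mulr_ge0; nra.
  rewrite !expr2 (_ : p * p * (q / 2 * (q / 2)) = p * p * (q * q) / 4); last by field.
  nra.
rewrite !lnXn ?divr_gt0 ?mulr2n in key; try lra.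
rewrite /ln2cosh -/p -lnM ?posrE // prod; lra.
Qed.
End Ln2cosh.

Section LogPartition.
Context {d : measure_display} {T : measurableType d} {R : realType}
  (P : probability T R) (x : T -> R).
Hypothesis mx : measurable_fun setT x.
Hypothesis ix : P.-integrable setT (EFin \o x).

Let iabsx : P.-integrable setT (EFin \o (fun t => `|x t|)).
Proof. exact: integrable_norm. Qed.

Lemma measurable_ln2cosh (s : R) : measurable_fun setT (fun t => ln2cosh (s * x t)).
Proof.
rewrite /ln2cosh.
have msx : measurable_fun setT (fun t => s * x t) by exact: measurable_funM.
apply: measurableT_comp; first exact: measurable_ln.
by apply: measurable_funD; apply: measurableT_comp => //; exact: measurableT_comp.
Qed.

Lemma integrable_ln2cosh (s : R) :
  P.-integrable setT (EFin \o (fun t => ln2cosh (s * x t))).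
Proof.
apply: (@le_integrable _ _ _ P _ measurableT _ (EFin \o (fun t => ln 2 + `|s| * `|x t|))).
- by apply: measurableT_comp => //; exact: measurable_ln2cosh.
- move=> t _ /=; rewrite lee_fin ger0_norm ?ln2cosh_ge0 // ger0_norm.
    by rewrite -normrM ln2cosh_le.
  by rewrite addr_ge0 ?mulr_ge0 // ln_ge0 // ler1n.
- have -> : EFin \o (fun t => ln 2 + `|s| * `|x t|) =
     (EFin \o cst (ln 2)) \+ (fun t => ((`|s|)%:E * (`|x t|)%:E)%E).
    by apply/funext => t /=; rewrite EFinD EFinM.
  apply: integrableD => //; first exact: finite_measure_integrable_cst.
  exact: integrableZl.
Qed.

(* [loglik P x lab s] unfolds to [s * slope - logpart s]. *)
Definition logpart (s : R) : R := Rintegral P setT (fun t => ln2cosh (s * x t)).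

Definition curv_bound (e : R) (t : T) : R := Num.min (2 * `|x t|) (4 * e * x t ^+ 2).

Lemma curv_bound_ge0 (e : R) t : 0 <= e -> 0 <= curv_bound e t.
Proof. by move=> e0; rewrite le_min mulr_ge0 //= mulr_ge0 ?sqr_ge0 // mulr_ge0. Qed.

Lemma curv_bound_le (e : R) t : curv_bound e t <= 2 * `|x t|.
Proof. by rewrite /curv_bound ge_min lexx. Qed.

Lemma measurable_curv_bound (e : R) : measurable_fun setT (curv_bound e).
Proof.
apply: (@measurable_minr _ _ _ _ (fun t => 2 * `|x t|) (fun t => 4 * e * x t ^+ 2)).
  by apply: measurable_funM => //; exact: measurableT_comp.
by apply: measurable_funM => //; exact: measurable_funX.
Qed.

Lemma integrable_curv_bound {e : R} : 0 <= e -> P.-integrable setT (EFin \o curv_bound e).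
Proof.
move=> e0; apply: (@le_integrable _ _ _ P _ measurableT _ (fun t => (2%:E * (`|x t|)%:E)%E)).
- by apply: measurableT_comp => //; exact: measurable_curv_bound.
- move=> t _ /=; rewrite lee_fin ger0_norm ?curv_bound_ge0 //.
  by rewrite (le_trans (curv_bound_le _ _)) // ler_norm.
- exact: integrableZl.
Qed.

Lemma ln2cosh_second_diff_le (u e y : R) : 0 < e ->
  ln2cosh ((u + e) * y) + ln2cosh ((u - e) * y) - 2 * ln2cosh (u * y)
  <= e * Num.min (2 * `|y|) (4 * e * y ^+ 2).
Proof.
move=> e0; rewrite mulrDl mulrBl.
apply: (le_trans (ln2cosh_second_diff _ _)).
have -> : e * Num.min (2 * `|y|) (4 * e * y ^+ 2)
          = 2 * Num.min `|e * y| (2 * (e * y) ^+ 2).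
  rewrite !minr_pMr ?ltW // normrM (gtr0_norm e0).
  by apply: f_equal2; ring.
by rewrite ler_wpM2l // ln_cosh_le_min.
Qed.

Lemma logpart_second_diff_le (s0 e : R) : 0 < e ->
  logpart (s0 + e) + logpart (s0 - e) - 2 * logpart s0
  <= e * Rintegral P setT (curv_bound e).
Proof.
move=> e0; have ie := integrable_ln2cosh; have ib := integrable_curv_bound (ltW e0).
set f1 := fun t => ln2cosh ((s0 + e) * x t); set f2 := fun t => ln2cosh ((s0 - e) * x t).
set f0 := fun t => ln2cosh (s0 * x t).
have iD : P.-integrable setT (EFin \o (fun t => f1 t + f2 t)).
  exact: (integrableD measurableT (ie _) (ie _)).
have iZ k (g : T -> R) : P.-integrable setT (EFin \o g) ->
    P.-integrable setT (EFin \o (fun t => k * g t)).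
  exact: integrableZl.
rewrite /logpart -/f1 -/f2 -/f0 -RintegralZl // -RintegralD // -RintegralB //;
  last exact: iZ.
rewrite -RintegralZl //; apply: le_Rintegral => //; last first.
- by move=> t _; exact: ln2cosh_second_diff_le.
- exact: iZ.
- exact: (integrableB measurableT iD (iZ 2 _ (ie _))).
Qed.

Lemma curv_bound_integral_cvg0 :
  (\int[P]_t (curv_bound (harmonic n) t)%:E)%E @[n --> \oo] --> 0%E.
Proof.
have i2x : P.-integrable setT (fun t => (2 * `|x t|)%:E).
  exact: (integrableZl measurableT 2 iabsx).
have cvg_pt : {ae P, forall t, setT t ->
    (curv_bound (harmonic n) t)%:E @[n --> \oo] --> (cst 0%E : T -> \bar R) t}.
  apply: aeW => t _ /=; apply: cvg_EFin; first exact: nearW.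
  apply: (squeeze_cvgr (f := fun _ => 0) (h := fun n => 4 * x t ^+ 2 * harmonic n)).
  - apply: nearW => n /=; rewrite curv_bound_ge0 ?harmonic_ge0 //= /curv_bound ge_min.
    by rewrite mulrAC lexx orbT.
  - exact: cvg_cst.
  - by rewrite -(mulr0 (4 * x t ^+ 2)); apply: cvgM; [exact: cvg_cst | exact: cvg_harmonic].
have dom : {ae P, forall t n, setT t -> (`|(curv_bound (harmonic n) t)%:E| <= (2 * `|x t|)%:E)%E}.
  apply: aeW => t n _ /=.
  by rewrite lee_fin ger0_norm ?curv_bound_ge0 ?harmonic_ge0 ?curv_bound_le.
have mf n : measurable_fun setT (fun t => (curv_bound (harmonic n) t)%:E).
  by apply: measurableT_comp => //; exact: measurable_curv_bound.
have [_ _] := dominated_convergence measurableT mf (measurable_cst _) cvg_pt i2x dom.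
by rewrite integral0.
Qed.

Lemma logpart_common_argmax_slope_le {a b s0 : R} :
  (forall s, s * b - logpart s <= s0 * b - logpart s0) ->
  (forall s, s * a - logpart s <= s0 * a - logpart s0) ->
  b <= a.
Proof.
move=> maxb maxa.
have gap n : b - a <= Rintegral P setT (curv_bound (harmonic n)).
  have h0 := @harmonic_gt0 R n.
  rewrite -(ler_pM2l h0); apply: le_trans (common_argmax_slope_gap (harmonic n) maxb maxa) _.
  exact: logpart_second_diff_le.
rewrite -subr_le0 -lee_fin; apply: (cvge_ge _ curv_bound_integral_cvg0).
apply: nearW => n; rewrite -[X in (_ <= X)%E]fineK ?lee_fin ?gap //.
exact: integrable_fin_num (integrable_curv_bound (harmonic_ge0 n)).
Qed.

End LogPartition.

Lemma integrable_lab_events {d : measure_display} {T : measurableType d}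
    {R : realType} {mu : {measure set T -> \bar R}} {lab : T -> bool} {f : T -> \bar R} :
  (forall k, measurable (lab_event lab k)) ->
  (forall k, mu.-integrable (lab_event lab k) f) ->
  mu.-integrable setT f.
Proof.
move=> mlab ilab.
have split_f : f = (f \_ (lab_event lab true)) \+ (f \_ (lab_event lab false)).
  apply/funext => t /=; rewrite /restrict /lab_event.
  case E: (lab t).
  - by rewrite mem_set ?memNset ?adde0 //= E.
  - by rewrite memNset ?mem_set ?add0e //= E.
rewrite split_f; apply: integrableD => //;
  exact: (integrable_mkcond _ (mlab _)).1.
Qed.

Theorem proposition2 (d : measure_display) (T : measurableType d)
  (R : realType) (P : probability T R)
  (x : T -> R) (ystar y : T -> bool) (fstar : bool -> R -> R)
  (shatstar shat : R) :
  measurable_fun setT x ->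
  (forall k, measurable (lab_event ystar k)) ->
  (forall k, measurable (lab_event y k)) ->
  (* p_k^* > 0 *)
  (forall k, 0 < lab_prob P ystar k) ->
  (* the law of x given y^* = k has density f_k^* (w.r.t. Lebesgue measure) *)
  (forall k u, 0 <= fstar k u) ->
  (forall k, measurable_fun setT (fstar k)) ->
  (forall k (A : set R), measurable A ->
     P (lab_event ystar k `&` x @^-1` A)
     = ((lab_prob P ystar k)%:E
       * \int[@lebesgue_measure R]_(u in A) (fstar k u)%:E)%E) ->
  (* E|X_k^*| < oo *)
  (forall k, P.-integrable (lab_event ystar k) (fun t => (x t)%:E)) ->
  0 < cond_mean P x ystar true ->
  cond_mean P x ystar false < 0 ->
  (* P(X_1^* < 0) > 0 and P(X_0^* > 0) > 0 *)
  (0 < P (lab_event ystar true `&` [set t | (x t < 0)%R]))%E ->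
  (0 < P (lab_event ystar false `&` [set t | (0 < x t)%R]))%E ->
  (* observed labels: X_k (law of x given y = k) is defined *)
  (forall k, 0 < lab_prob P y k) ->
  (* (iii) *)
  cond_mean P x y true <= cond_mean P x ystar true ->
  cond_mean P x ystar false <= cond_mean P x y false ->
  (* (iv) *)
  lab_prob P y true * cond_mean P x y true
    - lab_prob P y false * cond_mean P x y false
  < lab_prob P ystar true * cond_mean P x ystar true
    - lab_prob P ystar false * cond_mean P x ystar false ->
  (* shat^* maximises L^*, shat maximises L *)
  (forall s, loglik P x ystar s <= loglik P x ystar shatstar) ->
  (forall s, loglik P x y s <= loglik P x y shat) ->
  shat < shatstar.
Proof.
move=> mx mystar _ _ _ _ _ ixstar _ _ _ _ _ _ _ slope_lt max_star max_obs.
have ix : P.-integrable setT (EFin \o x) := integrable_lab_events mystar ixstar.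
move: slope_lt; set b := _ - _; set bstar := _ - _ => slope_lt.
have max_star' s : s * bstar - logpart P x s <= shatstar * bstar - logpart P x shatstar.
  exact: max_star.
have max_obs' s : s * b - logpart P x s <= shat * b - logpart P x shat.
  exact: max_obs.
have le_hat : shat <= shatstar.
  by have := argmax_slope_mono max_obs' max_star'; rewrite pmulr_lge0 ?subr_gt0 // subr_ge0.
rewrite lt_neqAle le_hat andbT; apply/eqP => eq_hat; rewrite eq_hat in max_obs'.
have := logpart_common_argmax_slope_le P x mx ix max_star' max_obs'.
by rewrite leNgt slope_lt.
Qed.
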